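(* Let $f:\mathbb{R}^d\to\mathbb{R}$ be twice differentiable with $f^*:=\sup_\theta f(\theta)$ and $f(\theta)<f^*$ for all $\theta$. Suppose (i) $f$ is $L_1$ non-uniform smooth and (ii) $f$ satisfies the reversed Łojasiewicz inequality $\|\nabla f(\theta)\|_2\le\nu[f^*-f(\theta)]$ for all $\theta$, with $\nu>0$. Then $\theta\mapsto\ln(f^*-f(\theta))$ is $L_1\nu$-smooth.
   Context: $f$ is $L_1$ non-uniform smooth: $|f(\theta)-f(\theta')-\langle\nabla f(\theta'),\theta-\theta'\rangle|\le\frac{L_1\|\nabla f(\theta')\|_2}{2}\|\theta-\theta'\|_2^2$ for all $\theta,\theta'$. A function $g$ is $M$-smooth if $\nabla^2 g(\theta)\preceq M I$ for all $\theta$ (equivalently, here, the one-sided quadratic upper bound $g(\theta')\le g(\theta)+\langle\nabla g(\theta),\theta'-\theta\rangle+\frac M2\|\theta'-\theta\|_2^2$). *)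

From HB Require Import structures.
From mathcomp Require Import all_boot all_order all_algebra.
From mathcomp Require Import all_classical all_reals all_analysis.
Set Implicit Arguments. Unset Strict Implicit. Unset Printing Implicit Defensive.
Import Order.TTheory GRing.Theory Num.Theory.
Import numFieldNormedType.Exports.
Local Open Scope ring_scope.

Section Defs.
Variables (R : realType) (d : nat).
Notation V := 'rV[R]_d.

(* Euclidean inner product and 2-norm on R^d (the library norm on matrices is the sup norm). *)
Definition dotp (u v : V) : R := \sum_(i < d) u 0 i * v 0 i.
Definition norm2 (u : V) : R := Num.sqrt (dotp u u).

Definition e_ (i : 'I_d) : V := delta_mx 0 i.

Definition partial (f : V -> R) (i : 'I_d) (x : V) : R := 'D_(e_ i) f x.
Definition grad (f : V -> R) (x : V) : V := \row_(i < d) partial f i x.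

Definition twice_differentiable (f : V -> R) : Prop :=
  (forall x, differentiable f x) /\
  (forall (i : 'I_d) x, differentiable (partial f i) x).

Definition hessian (f : V -> R) (x : V) : 'M[R]_d :=
  \matrix_(i < d, j < d) 'D_(e_ j) (partial f i) x.

Definition nonuniform_smooth (L1 : R) (f : V -> R) : Prop :=
  forall th th' : V,
    `| f th - f th' - dotp (grad f th') (th - th') |
      <= L1 * norm2 (grad f th') / 2 * norm2 (th - th') ^+ 2.

(* M-smooth: Hessian exists and  hessian g x <= M I  in the Loewner order,
   i.e.  v^T (hessian g x) v <= M * v^T v  for all v. *)
Definition M_smooth (M : R) (g : V -> R) : Prop :=
  twice_differentiable g /\
  forall (x v : V), (v *m hessian g x *m v^T) 0 0 <= M * dotp v v.

End Defs.

From HB Require Import structures.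
From mathcomp Require Import all_boot all_order all_algebra.
From mathcomp Require Import all_classical all_reals all_analysis.
From mathcomp Require Import ring lra.
Set Implicit Arguments. Unset Strict Implicit. Unset Printing Implicit Defensive.
Import Order.TTheory GRing.Theory Num.Theory.
Import numFieldNormedType.Exports.
Local Open Scope classical_set_scope.
Local Open Scope ring_scope.

(* Write F := f^* - f > 0. The Hessian of ln F is
   -(grad f)(grad f)^T / F^2 - (hess f) / F, whose first term is negative
   semidefinite. Applying non-uniform smoothness at x and x + t v in both directions
   and letting t -> 0 gives v^T (hess f x) v >= -L1 |grad f x| |v|^2, and the reversed
   Lojasiewicz inequality bounds |grad f x| / F by nu. Finally L1 >= 0, since for
   L1 < 0 non-uniform smoothness forces f to be constant, whereas f never attains
   its supremum. *)

Section LnComp.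
Variables (R : realType) (V : normedModType R) (h : V -> R) (y : V).
Hypotheses (dh : differentiable h y) (hy_gt0 : 0 < h y).

Lemma differentiable_ln_comp : differentiable (@ln R \o h) y.
Proof.
apply: differentiable_comp => //; apply/derivable1_diffP.
exact: (@ex_derive _ _ _ _ _ _ _ (is_derive1_ln hy_gt0)).
Qed.

Lemma derive_ln_comp v : 'D_v (@ln R \o h) y = 'D_v h y / h y.
Proof.
have dln : derivable (@ln R) (h y) 1.
  exact: (@ex_derive _ _ _ _ _ _ _ (is_derive1_ln hy_gt0)).
rewrite deriveE; last exact: differentiable_ln_comp.
rewrite diff_comp // ?(deriveE _ dh) /=; last exact/derivable1_diffP.
by rewrite deriv1E // derive1E (@derive_val _ _ _ _ _ _ _ (is_derive1_ln hy_gt0)).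
Qed.

End LnComp.

Section RowVectors.
Variables (R : realType) (d : nat).
Implicit Types (u v w z : 'rV[R]_d) (M : 'M[R]_d).

Lemma dotpBl u w z : dotp (u - w) z = dotp u z - dotp w z.
Proof. by rewrite /dotp -sumrB; apply: eq_bigr => i _; rewrite !mxE mulrBl. Qed.

Lemma dotpZl k u w : dotp (k *: u) w = k * dotp u w.
Proof. by rewrite /dotp mulr_sumr; apply: eq_bigr => i _; rewrite !mxE mulrA. Qed.

Lemma dotpZr k u w : dotp u (k *: w) = k * dotp u w.
Proof. by rewrite /dotp mulr_sumr; apply: eq_bigr => i _; rewrite !mxE mulrCA. Qed.

Lemma dotpNr u w : dotp u (- w) = - dotp u w.
Proof. by rewrite /dotp -sumrN; apply: eq_bigr => i _; rewrite !mxE mulrN. Qed.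

Lemma dotp0l w : dotp 0 w = 0.
Proof. by rewrite /dotp big1 // => i _; rewrite mxE mul0r. Qed.

Lemma dotp_ge0 u : 0 <= dotp u u.
Proof. by apply: sumr_ge0 => i _; rewrite -expr2 sqr_ge0. Qed.

Lemma dotp_eq0 u : dotp u u = 0 -> u = 0.
Proof.
move=> /eqP; rewrite psumr_eq0 => [/allP u0|i _]; last by rewrite -expr2 sqr_ge0.
apply/rowP => i; rewrite mxE.
by have /implyP/(_ isT) := u0 i (mem_index_enum i); rewrite mulf_eq0 orbb => /eqP.
Qed.

Lemma sqr_norm2 u : norm2 u ^+ 2 = dotp u u.
Proof. by rewrite sqr_sqrtr // dotp_ge0. Qed.

Lemma norm2_eq0 u : norm2 u = 0 -> u = 0.
Proof. by move=> u0; apply: dotp_eq0; rewrite -sqr_norm2 u0 expr0n. Qed.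

Lemma norm2N u : norm2 (- u) = norm2 u.
Proof.
rewrite /norm2 /dotp; congr Num.sqrt.
by apply: eq_bigr => i _; rewrite !mxE mulrNN.
Qed.

Lemma qformE M v : (v *m M *m v^T) 0 0 = \sum_i v 0 i * \sum_j M i j * v 0 j.
Proof.
rewrite -mulmxA mxE; apply: eq_bigr => i _.
by rewrite !mxE; under eq_bigr do rewrite !mxE.
Qed.

Lemma qform_trmx_mul u v : (v *m (u^T *m u) *m v^T) 0 0 = dotp u v ^+ 2.
Proof.
rewrite mulmxA -mulmxA mxE big_ord1 expr2 !mxE /dotp.
by congr (_ * _); apply: eq_bigr => i _; rewrite !mxE mulrC.
Qed.

Lemma deriveE_partial (h : 'rV[R]_d -> R) x v : differentiable h x ->
  'D_v h x = \sum_i v 0 i * partial h i x.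
Proof.
move=> dh; rewrite deriveE // {1}(row_sum_delta v) linear_sum.
by apply: eq_bigr => i _; rewrite linearZ /partial deriveE.
Qed.

End RowVectors.

Section Gradient.
Variables (R : realType) (d : nat) (f : 'rV[R]_d -> R).
Hypothesis dpf : forall i x, differentiable (partial f i) x.

Lemma continuous_norm2_grad : continuous (fun x => norm2 (grad f x)).
Proof.
have -> : (fun x => norm2 (grad f x)) =
    Num.sqrt \o \sum_(i < d) (partial f i * partial f i).
  apply/funext => x; rewrite /= fct_sumE /norm2 /dotp.
  by congr Num.sqrt; apply: eq_bigr => i _; rewrite !mxE.
move=> x; apply: continuous_comp; last exact: sqrt_continuous.
apply: differentiable_continuous; apply: differentiable_sum => i.
exact: differentiableM.
Qed.

Lemma dotp_gradE v :
  (fun x => dotp (grad f x) v) = \sum_(i < d) (v 0 i *: partial f i).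
Proof.
apply/funext => x; rewrite fct_sumE /dotp.
by apply: eq_bigr => i _; rewrite !mxE mulrC.
Qed.

Lemma differentiable_dotp_grad v x : differentiable (fun y => dotp (grad f y) v) x.
Proof. by rewrite dotp_gradE; apply: differentiable_sum => i; exact: differentiableZ. Qed.

Lemma derive_dotp_grad v x :
  'D_v (fun y => dotp (grad f y) v) x = (v *m hessian f x *m v^T) 0 0.
Proof.
rewrite dotp_gradE derive_sum => [|i]; last exact/diff_derivable/differentiableZ.
rewrite qformE; apply: eq_bigr => i _.
rewrite deriveZ ?deriveE_partial //; last exact: diff_derivable.
congr (_ * _); apply: eq_bigr => j _.
by rewrite mxE mulrC.
Qed.

End Gradient.

Section NonuniformSmooth.
Variables (R : realType) (d : nat) (f : 'rV[R]_d -> R) (L1 : R).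
Hypothesis hs : nonuniform_smooth L1 f.
Local Notation N x := (norm2 (grad f x)).

Lemma nonuniform_smooth_neg_const : L1 < 0 -> forall x y, f x = f y.
Proof.
move=> L1_lt0 x y; have := hs x y.
have [N0|N_neq0] := eqVneq (N y) 0.
  rewrite N0 (norm2_eq0 N0) dotp0l subr0 mulr0 !mul0r normr_le0 subr_eq0.
  by move/eqP.
have [/subr0_eq -> //|xy_neq0] := eqVneq (x - y) 0.
have N_gt0 : 0 < N y by rewrite lt_def N_neq0 sqrtr_ge0.
have n_gt0 : 0 < norm2 (x - y) ^+ 2.
  rewrite exprn_gt0 // lt_def sqrtr_ge0 andbT.
  by apply: contra xy_neq0 => /eqP/norm2_eq0 ->.
move=> /(le_trans (normr_ge0 _)).
by rewrite pmulr_lge0 // pmulr_lge0 ?invr_gt0 // pmulr_lge0 // leNgt L1_lt0.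
Qed.

Lemma nonuniform_smooth_grad_inner_ge x y :
  - (L1 * (N x + N y) / 2 * dotp (y - x) (y - x))
    <= dotp (grad f y - grad f x) (y - x).
Proof.
have := hs y x; have := hs x y.
rewrite -(opprB y x) norm2N dotpNr !sqr_norm2 (dotpBl (grad f y)) !ler_norml.
move=> /andP[lb_xy _] /andP[lb_yx _]; lra.
Qed.

Lemma nonuniform_smooth_grad_quotient_ge x v (t : R) : t != 0 ->
  - (L1 / 2 * dotp v v) * (N x + N (t *: v + x))
    <= t^-1 * dotp (grad f (t *: v + x) - grad f x) v.
Proof.
move=> t0; have := nonuniform_smooth_grad_inner_ge x (t *: v + x).
rewrite addrK dotpZl !dotpZr => ineq.
have := ler_wpM2r (sqr_ge0 t^-1) ineq.
set G := dotp (grad f _ - _) v; set M := N x + _.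
have -> : t * G * t^-1 ^+ 2 = t^-1 * G by field.
suff -> : - (L1 * M / 2 * (t * (t * dotp v v))) * t^-1 ^+ 2 = - (L1 / 2 * dotp v v) * M by [].
by field.
Qed.

Lemma nonuniform_smooth_hessian_ge
    (dpf : forall i x, differentiable (partial f i) x) x v :
  - (L1 * N x * dotp v v) <= (v *m hessian f x *m v^T) 0 0.
Proof.
pose P y := dotp (grad f y) v.
have P_cvg : (fun t : R => t^-1 *: (P (t *: v + x) - P x)) @ 0^' --> 'D_v P x.
  exact: diff_derivable (differentiable_dotp_grad dpf v x).
have N_cvg : N (t *: v + x) @[t --> 0^'] --> N x.
  have -> : N x = N (0 *: v + x) by rewrite scale0r add0r.
  apply/continuous_withinNx.
  apply: (@continuous_comp _ _ _ (fun t : R => t *: v + x) (fun y => N y)).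
    exact/differentiable_continuous.
  exact: continuous_norm2_grad.
have lb_cvg : - (L1 / 2 * dotp v v) * (N x + N (t *: v + x)) @[t --> 0^'] -->
    - (L1 / 2 * dotp v v) * (N x + N x).
  by apply: cvgMl_tmp; apply: cvgD N_cvg; exact: cvg_cst.
have := ler_cvg_to lb_cvg P_cvg.
rewrite derive_dotp_grad //.
have -> : - (L1 / 2 * dotp v v) * (N x + N x) = - (L1 * N x * dotp v v) by field.
apply; near=> t; rewrite /P -dotpBl; apply: nonuniform_smooth_grad_quotient_ge.
by near: t; exact: nbhs_dnbhs_neq.
Unshelve. all: by end_near.
Qed.

End NonuniformSmooth.

Section LogGap.
Variables (R : realType) (d : nat) (f : 'rV[R]_d -> R) (c : R).
Hypotheses (f_lt : forall x, f x < c) (df : forall x, differentiable f x)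
  (dpf : forall i x, differentiable (partial f i) x).

Let gap_gt0 x : 0 < c - f x. Proof. by rewrite subr_gt0. Qed.

Lemma differentiable_gap x : differentiable (fun y => c - f y) x.
Proof. exact: (@differentiableB _ _ _ (cst c) f). Qed.

Lemma derive_gap x v : 'D_v (fun y => c - f y) x = - 'D_v f x.
Proof.
rewrite (_ : (fun y => c - f y) = cst c - f) // deriveB ?derive_cst ?sub0r //.
exact: diff_derivable.
Qed.

Lemma partial_log_gap i x :
  partial (fun y => ln (c - f y)) i x = - partial f i x / (c - f x).
Proof.
rewrite /partial -[fun y => _]/(@ln R \o (fun y => c - f y)).
by rewrite derive_ln_comp ?derive_gap //; exact: differentiable_gap.
Qed.

Lemma partial_log_gapE i :
  partial (fun y => ln (c - f y)) i = - partial f i * (fun y => (c - f y)^-1).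
Proof. by apply/funext => y; rewrite partial_log_gap. Qed.

Lemma twice_differentiable_log_gap : twice_differentiable (fun y => ln (c - f y)).
Proof.
split=> [x|i x]; first exact: (differentiable_ln_comp (differentiable_gap x)).
rewrite partial_log_gapE; apply: differentiableM; first exact: differentiableN.
by apply: differentiableV; [exact: differentiable_gap | rewrite gt_eqF].
Qed.

Lemma hessian_log_gap x : hessian (fun y => ln (c - f y)) x =
  - (c - f x)^-2 *: ((grad f x)^T *m grad f x) - (c - f x)^-1 *: hessian f x.
Proof.
apply/matrixP => i j; rewrite !mxE big_ord1 !mxE partial_log_gapE.
have dpi : derivable (partial f i) x (e_ R j) by exact: diff_derivable.
have dNpi : derivable (- partial f i) x (e_ R j) by exact: derivableN.
have dinv : derivable (fun y => (c - f y)^-1) x (e_ R j).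
  by apply: derivableV; [rewrite gt_eqF | exact/diff_derivable/differentiable_gap].
rewrite deriveM // deriveN // deriveV ?gt_eqF //.
  rewrite derive_gap /GRing.scale /= -/(partial f j x).
  by rewrite -[(- partial f i) x]/(- partial f i x); field; rewrite gt_eqF.
exact/diff_derivable/differentiable_gap.
Qed.

Lemma qform_hessian_log_gap x v :
  (v *m hessian (fun y => ln (c - f y)) x *m v^T) 0 0 =
  - dotp (grad f x) v ^+ 2 / (c - f x) ^+ 2 - (v *m hessian f x *m v^T) 0 0 / (c - f x).
Proof.
rewrite -qform_trmx_mul hessian_log_gap mulmxBr mulmxBl -!scalemxAr -!scalemxAl.
by rewrite !mxE; ring.
Qed.

End LogGap.

Theorem lemma1 (R : realType) (d : nat) (f : 'rV[R]_d -> R) (fstar L1 nu : R)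
  (hf2 : twice_differentiable f)
  (hsup : fstar = sup (range f))
  (hlt : forall th, f th < fstar)
  (hsmooth : nonuniform_smooth L1 f)
  (hnu : 0 < nu)
  (hloj : forall th, norm2 (grad f th) <= nu * (fstar - f th)) :
  M_smooth (L1 * nu) (fun th => ln (fstar - f th)).
Proof.
have [df dpf] := hf2.
have L1_ge0 : 0 <= L1.
  rewrite leNgt; apply/negP => /(nonuniform_smooth_neg_const hsmooth) fconst.
  have := hlt 0; rewrite hsup (_ : range f = [set f 0]) ?sup1 ?ltxx //.
  by apply/seteqP; split => [_ [y _ <-]|_ ->]; [rewrite (fconst y 0) | exists 0].
split; first exact: twice_differentiable_log_gap.
move=> x v; rewrite qform_hessian_log_gap //.
have hess_lb := nonuniform_smooth_hessian_ge hsmooth dpf x v.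
have gap_gt0 : 0 < fstar - f x by rewrite subr_gt0.
have grad_bound := hloj x.
set F := fstar - f x in gap_gt0 grad_bound *.
set Q := (v *m hessian f x *m v^T) 0 0 in hess_lb *.
have outer_le0 : - dotp (grad f x) v ^+ 2 / F ^+ 2 <= 0.
  by rewrite mulNr oppr_le0 divr_ge0 ?sqr_ge0.
suff : - (Q / F) <= L1 * nu * dotp v v by lra.
rewrite -mulNr ler_pdivrMr //.
have := ler_wpM2l (mulr_ge0 L1_ge0 (dotp_ge0 v)) grad_bound.
lra.
Qed.
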